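(* Consider the generalized urn model described in the context and assume condition (A'1). Then almost surely, for every $n\ge 0$, $w(Y_n)>0$, and the sequence $(w(Y_n))_{n\ge 0}$ is non-decreasing.
   Context: Let $d\ge 1$, let $(\Omega,\mathcal A,\mathbb P)$ be a probability space, let $e^1,\dots,e^d$ be the canonical basis of $\mathbb R^d$, and for $u=(u^i)\in\mathbb R^d$ let $w(u)=\sum_{k=1}^d u^k$. Let $Y_0$ be a random vector in $\mathbb R_+^d\setminus\{0\}$, let $(U_n)_{n\ge1}$ be i.i.d. uniform on $[0,1]$, and let $(D_n)_{n\ge1}$ be random $d\times d$ real matrices (the addition rule matrices). Define recursively, for $n\ge1$, $X_n=\sum_{j=1}^d \mathbf 1_{\left\{\frac{\sum_{\ell=1}^{j-1}Y_{n-1}^\ell}{\sum_{\ell=1}^d Y_{n-1}^\ell}<U_n\le \frac{\sum_{\ell=1}^{j}Y_{n-1}^\ell}{\sum_{\ell=1}^d Y_{n-1}^\ell}\right\}}e^j$ and $Y_n=Y_{n-1}+D_nX_n$. Let $\mathcal F_n=\sigma(Y_0,U_k,D_k,1\le k\le n)$ and $H_n=\mathbb E[D_n\mid\mathcal F_{n-1}]$ (entrywise), $n\ge1$. Condition (A'1): (i) there exist $c_1,\dots,c_d\in(0,\infty)$ such that for every $n\ge1$ and all $i,j\in\{1,\dots,d\}$, $\frac{\delta_{ij}}{c_i}+D_n^{ij}\in\frac{\mathbb N}{c_i}$ a.s. ($\delta_{ij}$ the Kronecker symbol), and for every $j$, $\sum_{i=1}^d D_n^{ij}\ge 0$ a.s.;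 (ii) for every $n\ge1$ and every $j$, $\sum_{i=1}^d H_n^{ij}=1$ a.s.; (iii) $Y_0\in\left(\prod_{i=1}^d\frac{\mathbb N}{c_i}\right)\setminus\{0\}$. *)

From HB Require Import structures.
From mathcomp Require Import all_boot all_order all_algebra.
From mathcomp Require Import all_classical all_reals all_analysis.
Set Implicit Arguments.
Unset Strict Implicit.
Unset Printing Implicit Defensive.
Import Order.TTheory GRing.Theory Num.Theory.
Import numFieldNormedType.Exports.
Local Open Scope classical_set_scope.
Local Open Scope ring_scope.

Section urn.
Context {R : realType} {d : nat}.

Definition urn_w (u : 'cV[R]_d) : R := \sum_(k < d) u k 0.

(* X_n as a function of Y_{n-1} and U_n *)
Definition urn_draw (y : 'cV[R]_d) (u : R) : 'cV[R]_d :=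
  \col_(j < d)
    (if ((\sum_(l < d | (l < j)%N) y l 0) / urn_w y < u)
        && (u <= (\sum_(l < d | (l <= j)%N) y l 0) / urn_w y)
     then 1 else 0).

(* Y_0 = y0, Y_n = Y_{n-1} + D_n X_n  (U 0, D 0 are unused) *)
Fixpoint urnY (y0 : 'cV[R]_d) (U : nat -> R) (D : nat -> 'M[R]_d) (n : nat)
    : 'cV[R]_d :=
  match n with
  | 0 => y0
  | n'.+1 => let y := urnY y0 U D n' in y + D n'.+1 *m urn_draw y (U n'.+1)
  end.
End urn.

Section prob.
Context {dT : measure_display} {T : measurableType dT} {R : realType}
  (P : probability T R).

Definition urn_filtration (d : nat) (Y0 : T -> 'cV[R]_d) (U : nat -> T -> R)
    (D : nat -> T -> 'M[R]_d) (n : nat) : set (set T) :=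
  <<s [set A | (exists i : 'I_d,
                  preimage_set_system setT (fun x => Y0 x i 0) measurable A)
        \/ (exists k : nat, (1 <= k <= n)%N /\
             (preimage_set_system setT (U k) measurable A \/
              exists i j : 'I_d,
                preimage_set_system setT (fun x => D k x i j) measurable A))] >>.

Definition is_cond_exp (F : set (set T)) (X H : T -> R) : Prop :=
  (forall B : set R, measurable B -> F (H @^-1` B)) /\
  P.-integrable setT (EFin \o X) /\
  P.-integrable setT (EFin \o H) /\
  (forall A, F A ->
     (\int[P]_(x in A) (X x)%:E = \int[P]_(x in A) (H x)%:E)%E).

Definition mutually_independent (U : nat -> T -> R) : Prop :=
  forall (s : seq nat) (B : nat -> set R), uniq s ->
    (forall k, measurable (B k)) ->
    P (\bigcap_(k in [set` s]) (U k @^-1` B k)) =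
    (\prod_(k <- s) P (U k @^-1` B k))%E.

Definition uniform01 (V : T -> R) : Prop :=
  measurable_fun setT V /\
  forall B : set R, measurable B -> P (V @^-1` B) = uniform_prob ltr01 B.
End prob.

(* Y_n is Y_{n-1} plus the column of D_n selected by the draw X_n, so
   w(Y_n) - w(Y_{n-1}) is a column sum of D_n, which is nonnegative almost
   surely by (A'1)(i).  Hence w(Y_n) is a.s. nondecreasing, and positive since
   w(Y_0) > 0.  Only the column-sum part of (A'1) is needed. *)

From HB Require Import structures.
From mathcomp Require Import all_boot all_order all_algebra.
From mathcomp Require Import all_classical all_reals all_analysis.
Import Order.TTheory GRing.Theory Num.Theory.
Import numFieldNormedType.Exports.
Local Open Scope classical_set_scope.
Local Open Scope ring_scope.

Section urn_weight.
Context {R : realType} {d : nat}.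
Implicit Types (y z x : 'cV[R]_d) (M : 'M[R]_d).

Lemma urn_w_gt0 y : (forall i, 0 <= y i 0) -> y != 0 -> 0 < urn_w y.
Proof.
move=> y_ge0 y_neq0; rewrite /urn_w lt_def sumr_ge0 // andbT.
apply: contra y_neq0 => /eqP/psumr_eq0P y_eq0.
by apply/eqP/matrixP => i j; rewrite (ord1 j) mxE y_eq0.
Qed.

Lemma urn_wD y z : urn_w (y + z) = urn_w y + urn_w z.
Proof. by rewrite /urn_w -big_split; apply: eq_bigr => k _; rewrite mxE. Qed.

Lemma urn_w_mulmx M x :
  urn_w (M *m x) = \sum_(j < d) (\sum_(i < d) M i j) * x j 0.
Proof.
rewrite /urn_w (eq_bigr (fun i => \sum_j M i j * x j 0)) => [|i _]; last first.
  by rewrite mxE.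
by rewrite exchange_big; apply: eq_bigr => j _; rewrite mulr_suml.
Qed.

Lemma urn_draw_ge0 y (u : R) (j : 'I_d) : 0 <= urn_draw y u j 0.
Proof. by rewrite mxE; case: ifP. Qed.

Lemma urn_w_le_add_draw y M (u : R) :
  (forall j, 0 <= \sum_(i < d) M i j) ->
  urn_w y <= urn_w (y + M *m urn_draw y u).
Proof.
move=> colsum_ge0; rewrite urn_wD lerDl urn_w_mulmx.
by apply: sumr_ge0 => j _; rewrite mulr_ge0 ?urn_draw_ge0.
Qed.

Variables (y0 : 'cV[R]_d) (U : nat -> R) (D : nat -> 'M[R]_d).
Hypothesis colsum_ge0 : forall n j, 0 <= \sum_(i < d) D n.+1 i j.

Lemma urnY_w_le_succ n : urn_w (urnY y0 U D n) <= urn_w (urnY y0 U D n.+1).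
Proof. exact: urn_w_le_add_draw. Qed.

Lemma urnY_w_gt0 n :
  (forall i, 0 <= y0 i 0) -> y0 != 0 -> 0 < urn_w (urnY y0 U D n).
Proof.
move=> y0_ge0 y0_neq0; elim: n => [|n IHn]; first exact: urn_w_gt0.
exact: lt_le_trans IHn (urnY_w_le_succ n).
Qed.

End urn_weight.

Theorem lemma1 (dT : measure_display) (T : measurableType dT) (R : realType)
  (P : probability T R) (d : nat)
  (Y0 : T -> 'cV[R]_d) (U : nat -> T -> R) (D : nat -> T -> 'M[R]_d)
  (c : 'I_d -> R) :
  (0 < d)%N ->
  (forall i : 'I_d, measurable_fun setT (fun x => Y0 x i 0)) ->
  (forall x, (forall i : 'I_d, 0 <= Y0 x i 0) /\ Y0 x != 0) ->
  mutually_independent P (fun k => U k.+1) ->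
  (forall n, (1 <= n)%N -> uniform01 P (U n)) ->
  (forall n (i j : 'I_d), (1 <= n)%N ->
     measurable_fun setT (fun x => D n x i j)) ->
  (forall i : 'I_d, 0 < c i) ->
  (forall n, (1 <= n)%N -> forall i j : 'I_d,
     {ae P, forall x, exists m : nat,
        (i == j)%:R / c i + D n x i j = m%:R / c i}) ->
  (forall n, (1 <= n)%N -> forall j : 'I_d,
     {ae P, forall x, 0 <= \sum_(i < d) D n x i j}) ->
  (forall n, (1 <= n)%N ->
     exists H : 'I_d -> 'I_d -> T -> R,
       (forall i j : 'I_d,
          is_cond_exp P (urn_filtration Y0 U D n.-1)
            (fun x => D n x i j) (H i j)) /\
       (forall j : 'I_d, {ae P, forall x, \sum_(i < d) H i j x = 1})) ->
  (forall x (i : 'I_d), exists m : nat, Y0 x i 0 = m%:R / c i) ->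
  {ae P, forall x,
     (forall n, 0 < urn_w (urnY (Y0 x) (fun k => U k x) (fun k => D k x) n)) /\
     (forall n, urn_w (urnY (Y0 x) (fun k => U k x) (fun k => D k x) n)
                <= urn_w (urnY (Y0 x) (fun k => U k x) (fun k => D k x) n.+1))}.
Proof.
move=> _ _ Y0_pos _ _ _ _ _ colsum_ge0 _ _.
have colsum_ge0_ae : {ae P, forall x, forall n j,
    0 <= \sum_(i < d) D n.+1 x i j}.
  apply: ae_foralln => n; apply: filter_forall => j.
  exact: colsum_ge0.
apply: filterS colsum_ge0_ae => x colsum_ge0_x.
have [Y0x_ge0 Y0x_neq0] := Y0_pos x.
split => n; first exact: urnY_w_gt0.
exact: urnY_w_le_succ.
Qed.
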